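(* Let $K$ be a perfect field. Then $K[X_1]^{G_1}=K[a_1,\Delta]$ if $\mathrm{char}(K)=2$, and $K[X_1]^{G_1}=K[b_2,\Delta]$ if $\mathrm{char}(K)=3$.
   Context: $K[X_1]=K[a_1,a_2,a_3,a_4,a_6]$ is the coordinate ring of the space of Weierstrass equations $y^2+a_1xy+a_3y=x^3+a_2x^2+a_4x+a_6$. $G_1$ is the group of substitutions $[1;r,s,t]$: $x=x'+r$, $y=y'+sx'+t$, acting on the coefficients; $K[X_1]^{G_1}$ is the ring of polynomials $F$ with $F\circ g=F$ for all $g\in G_1(\overline K)$. Here $b_2=a_1^2+4a_2$, $b_4=2a_4+a_1a_3$, $b_6=a_3^2+4a_6$, $b_8=a_1^2a_6+4a_2a_6-a_1a_3a_4+a_2a_3^2-a_4^2$, and $\Delta=-b_2^2b_8-8b_4^3-27b_6^2+9b_2b_4b_6$. *)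

From HB Require Import structures.
From mathcomp Require Import all_boot all_order all_algebra all_field.
From mathcomp Require Import mpoly.
Set Implicit Arguments. Unset Strict Implicit. Unset Printing Implicit Defensive.
Import GRing.Theory.
Local Open Scope ring_scope.

(* K[X_1] = K[a1,a2,a3,a4,a6] is modelled as {mpoly K[5]}, with
   a1 = 'X_0, a2 = 'X_1, a3 = 'X_2, a4 = 'X_3, a6 = 'X_4. *)
Section Weierstrass.
Variable K : fieldType.

Definition a1 : {mpoly K[5]} := 'X_(inord 0).
Definition a2 : {mpoly K[5]} := 'X_(inord 1).
Definition a3 : {mpoly K[5]} := 'X_(inord 2).
Definition a4 : {mpoly K[5]} := 'X_(inord 3).
Definition a6 : {mpoly K[5]} := 'X_(inord 4).

Definition b2 : {mpoly K[5]} := a1 ^+ 2 + 4%:R * a2.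
Definition b4 : {mpoly K[5]} := 2%:R * a4 + a1 * a3.
Definition b6 : {mpoly K[5]} := a3 ^+ 2 + 4%:R * a6.
Definition b8 : {mpoly K[5]} :=
  a1 ^+ 2 * a6 + 4%:R * a2 * a6 - a1 * a3 * a4 + a2 * a3 ^+ 2 - a4 ^+ 2.
Definition Delta : {mpoly K[5]} :=
  - b2 ^+ 2 * b8 - 8%:R * b4 ^+ 3 - 27%:R * b6 ^+ 2 + 9%:R * b2 * b4 * b6.

Definition generated2 (f g : {mpoly K[5]}) (F : {mpoly K[5]}) : Prop :=
  exists P : {mpoly K[2]}, F = P \mPo [tuple f; g].

Definition perfect_field : Prop :=
  forall p : nat, p \in [pchar K] -> forall x : K, exists y : K, y ^+ p = x.
End Weierstrass.

(* L is an algebraic closure of K via iota: L is algebraically closed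
   (closedFieldType) and every element of L is algebraic over iota(K). *)
Definition algebraic_over (K : fieldType) (L : fieldType)
  (iota : {rmorphism K -> L}) : Prop :=
  forall x : L, exists p : {poly K}, p != 0 /\ root (map_poly iota p) x.

(* Action of the substitution [1;r,s,t] : x = x' + r, y = y' + s x' + t
   on a point a = (a1,a2,a3,a4,a6) of X_1 (Silverman, Table 3.1, u = 1). *)
Definition G1act (L : ringType) (r s t : L) (a : 'I_5 -> L) : 'I_5 -> L :=
  let A1 := a (inord 0) in let A2 := a (inord 1) in let A3 := a (inord 2) in
  let A4 := a (inord 3) in let A6 := a (inord 4) in
  fun i => match val i with
  | 0 => A1 + 2%:R * s
  | 1 => A2 - s * A1 + 3%:R * r - s ^+ 2
  | 2 => A3 + r * A1 + 2%:R * t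
  | 3 => A4 - s * A3 + 2%:R * r * A2 - (t + r * s) * A1 + 3%:R * r ^+ 2
         - 2%:R * s * t
  | _ => A6 + r * A4 + r ^+ 2 * A2 + r ^+ 3 - t * A3 - t ^+ 2 - r * t * A1
  end.

(* F in K[X_1]^{G_1}: F o g = F (as functions on X_1(Kbar)) for all
   g = [1;r,s,t] in G_1(Kbar). *)
Definition G1_invariant (K : fieldType) (L : fieldType)
  (iota : {rmorphism K -> L}) (F : {mpoly K[5]}) : Prop :=
  forall (r s t : L) (a : 'I_5 -> L),
    (map_mpoly iota F).@[G1act r s t a] = (map_mpoly iota F).@[a].

From HB Require Import structures.
From mathcomp Require Import all_boot all_order all_algebra all_field.
From mathcomp Require Import mpoly.
From mathcomp Require Import ring.
Set Implicit Arguments. Unset Strict Implicit. Unset Printing Implicit Defensive.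
Import GRing.Theory.
Local Open Scope ring_scope.

(* Let f = a1, m = 6 in characteristic 2 and f = b2, m = 3 in characteristic 3.
   Where f does not vanish, some [1;r,s,t] moves a Weierstrass equation into the
   plane where only f and e = a6 are nonzero, and there Delta = - f^m e.  So an
   invariant F equals G(f, e) = G(f, - Delta / f^m) for the polynomial G obtained
   by restricting F to that plane.  To see that no power of f survives in a
   denominator, restrict F to a second coordinate plane (f, c): there Delta is
   a polynomial w_c(f) whose constant term w_c(0) takes every value as c varies,
   and F is a polynomial in f.  This forces f^(m l) to divide the coefficient of
   e^l in G, hence F = P(f, Delta).  Polynomial identities are checked pointwise
   over the algebraically closed field L. *)

Lemma eq_mmap n (R S : nzRingType) (f g : R -> S) (h k : 'I_n -> S) (p : {mpoly R[n]}) :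
  f =1 g -> h =1 k -> mmap f h p = mmap g k p.
Proof.
move=> eq_fg eq_hk; apply: eq_bigr => m _.
by rewrite eq_fg (mmap1_eq _ eq_hk).
Qed.

Lemma rmorph_mmap n (R S T : nzRingType) (phi : {rmorphism S -> T})
    (f : R -> S) (h : 'I_n -> S) (p : {mpoly R[n]}) :
  phi (mmap f h p) = mmap (phi \o f) (phi \o h) p.
Proof.
rewrite rmorph_sum; apply: eq_bigr => m _; rewrite rmorphM rmorph_prod /=.
by congr (_ * _); apply: eq_bigr => i _; rewrite rmorphXn.
Qed.

Lemma mmapXU n (R S : nzRingType) (f : {rmorphism R -> S}) (h : 'I_n -> S) (i : 'I_n) :
  mmap f h 'X_i = h i.
Proof. by rewrite mmapX mmap1U. Qed.

Lemma meval_map_mpoly n (R : nzRingType) (S : comNzRingType) (f : {rmorphism R -> S})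
    (v : 'I_n -> S) (p : {mpoly R[n]}) :
  (map_mpoly f p).@[v] = mmap f v p.
Proof.
rewrite -[LHS]/(meval v _) rmorph_mmap; apply: eq_mmap => [c|i] /=.
  by rewrite mevalC.
by rewrite mevalXU.
Qed.

Lemma mmap_comp_mpoly n k (R : nzRingType) (S : comNzRingType) (f : {rmorphism R -> S})
    (v : 'I_k -> S) (p : {mpoly R[n]}) (lq : n.-tuple {mpoly R[k]}) :
  mmap f v (p \mPo lq) = mmap f (fun i => mmap f v (tnth lq i)) p.
Proof.
by rewrite /comp_mpoly (rmorph_mmap (mmap f v)); apply: eq_mmap => // c /=; rewrite mmapC.
Qed.

Lemma mmap_muni n (R : nzRingType) (S : comNzRingType) (f : {rmorphism R -> S})
    (v : 'I_n.+1 -> S) (p : {mpoly R[n.+1]}) :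
  mmap f v p =
  (map_poly (mmap f (fun i => v (widen_ord (leqnSn n) i))) (muni p)).[v ord_max].
Proof.
rewrite muniE raddf_sum horner_sum [in LHS](mpolyE p) raddf_sum.
apply: eq_bigr => m _ /=.
rewrite -mul_polyC rmorphM /= map_polyC map_polyXn hornerCM hornerXn.
rewrite [in RHS]/= !mmapZ !mmapX -mulrA /mmap1 big_ord_recr /=; congr (_ * (_ * _)).
by apply: eq_bigr => i _; rewrite mnmE.
Qed.

Lemma muni_inj n (R : comNzRingType) : injective (@muni n R).
Proof.
move=> p q eq_pq.
by rewrite -(comp_mpoly_id p) -(comp_mpoly_id q) /comp_mpoly !mmap_muni eq_pq.
Qed.

Section ClosedField.
Variable L : closedFieldType.

Lemma closed_poly_eq0 (p : {poly L}) : (forall x, p.[x] = 0) -> p = 0.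
Proof.
move=> p0; apply/eqP; apply: contraT => /closed_nonrootP[x].
by rewrite /root p0 eqxx.
Qed.

Lemma closed_poly_eq0_nz (p : {poly L}) : (forall x, x != 0 -> p.[x] = 0) -> p = 0.
Proof.
move=> p0; suff /eqP : p * 'X = 0 by rewrite mulf_eq0 polyX_eq0 orbF => /eqP.
apply: closed_poly_eq0 => x; rewrite hornerMX.
by have [->|/p0->] := eqVneq x 0; rewrite ?mulr0 ?mul0r.
Qed.

Lemma closed_mmap_eq0 (K : fieldType) (iota : {rmorphism K -> L}) n (p : {mpoly K[n]}) :
  (forall v, mmap iota v p = 0) -> p = 0.
Proof.
elim: n p => [|n IHn] p p0.
  have := p0 (fun _ => 0); rewrite [p]nvar0_mpolyC mmapC => /eqP.
  by rewrite fmorph_eq0 => /eqP->.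
apply: (@muni_inj _ K); rewrite raddf0; apply/polyP => k; rewrite coef0; apply: IHn => v.
pose q := map_poly (mmap iota v) (muni p).
suff : q = 0 by move/(congr1 (coefp k)); rewrite /= coef_map coef0.
apply: closed_poly_eq0 => x.
pose w (i : 'I_n.+1) := if insub (val i) is Some j then v j else x.
have := p0 w; rewrite mmap_muni {2}/w insubN ?ltnn //= => <-.
by congr _.[_]; apply: eq_map_poly => c; apply: eq_mmap => // i; rewrite /w /= valK.
Qed.

Lemma dvdp_Xl (p : {poly L}) : ('X %| p) = root p 0.
Proof. by rewrite -dvdp_XsubCl subr0. Qed.

Lemma dvdp_Xn_coef (w : L -> {poly L}) : (forall y, exists c, (w c).[0] = y) ->
  forall N (B : {poly {poly L}}), (forall c, 'X^N %| B.[w c]) ->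
  forall k, 'X^N %| B`_k.
Proof.
move=> w_onto; elim=> [|N IHN] B dvdB k; first by rewrite expr0 dvd1p.
have dvdX_B : forall k, 'X %| B`_k.
  suff /polyP B0 : map_poly (horner_eval 0) B = 0.
    by move=> {}k; have := B0 k; rewrite coef_map coef0 /= dvdp_Xl => /eqP.
  apply: closed_poly_eq0 => y; have [c <-] := w_onto y.
  rewrite -[(w c).[0]]horner_evalE horner_map /= horner_evalE; apply/eqP.
  by rewrite -[_ == 0]/(root _ 0) -dvdp_Xl (dvdp_trans _ (dvdB c)) // exprSr dvdp_mull.
pose B' := map_poly (fun q => q %/ 'X) B.
have def_B : B = B' * 'X%:P.
  by apply/polyP => i; rewrite coefMC coef_map_id0 ?div0p // divpK.
have dvdB' : forall c, 'X^N %| B'.[w c].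
  by move=> c; have := dvdB c; rewrite def_B hornerM hornerC exprSr dvdp_mul2r ?polyX_eq0.
by rewrite def_B coefMC exprSr dvdp_mul2r ?polyX_eq0 // IHN.
Qed.

Lemma dvdp_Xmk_coef (w A : L -> {poly L}) (m : nat) (G : {poly {poly L}}) :
    (forall y, exists c, (w c).[0] = y) ->
    (forall c x, x != 0 -> (A c).[x] = G.[(w c).[x] / x ^+ m, x]) ->
  forall k, 'X^(m * k) %| G`_k.
Proof.
move=> w_onto defA k; set N := size G.
have [ltkN|leNk] := ltnP k N; last by rewrite nth_default // dvdp0.
(* B(x, y) = x^(m N) G(x, y / x^m) *)
pose B := \poly_(i < N) ('X^(m * (N - i)) * G`_i).
have dvdB : forall c, 'X^(m * N) %| B.[w c].
  move=> c; suff -> : B.[w c] = A c * 'X^(m * N) by rewrite dvdp_mull.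
  apply/eqP; rewrite -subr_eq0; apply/eqP; apply: closed_poly_eq0_nz => x x0.
  rewrite hornerD hornerN hornerM hornerXn defA //; apply/eqP; rewrite subr_eq0; apply/eqP.
  rewrite (horner_coef_wide (w c) (size_poly _ _)) (horner_coef G) !horner_sum mulr_suml.
  apply: eq_bigr => i _.
  rewrite coef_poly ltn_ord !hornerM -rmorphXn !hornerC hornerXn horner_exp.
  have -> : (m * N = m * (N - i) + m * i)%N by rewrite -mulnDr subnK // ltnW.
  rewrite exprD !exprM (mulrC ((x ^+ m) ^+ (N - i))) mulrA [RHS]mulrAC.
  rewrite -(mulrA (G`_i).[x] _ ((x ^+ m) ^+ i)) -exprMn divfK ?expf_neq0 //.
  by rewrite mulrAC.
have := dvdp_Xn_coef w_onto dvdB k; rewrite coef_poly ltkN.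
by rewrite -{1}(subnK (ltnW ltkN)) mulnDr exprD dvdp_mul2l // expf_neq0 ?polyX_eq0.
Qed.

Lemma closed_rootXn n (y : L) : (0 < n)%N -> exists x : L, x ^+ n = y.
Proof.
case: n => // n _.
have [x xn] := @solve_monicpoly L n.+1 (fun i => if i == 0%N then y else 0) isT.
by exists x; rewrite xn big_ord_recl /= mulr1 big1 ?addr0 // => i _; rewrite mul0r.
Qed.

Lemma closed_root_quadratic (b c : L) : exists x : L, x ^+ 2 = c + b * x.
Proof.
have [x x2] := @solve_monicpoly L 2 (fun i => if i == 0%N then c else b) isT.
by exists x; rewrite x2 !big_ord_recl big_ord0 /= mulr1 addr0.
Qed.
End ClosedField.

Definition plane n (S : nzRingType) (i j : 'I_n) (x y : S) : 'I_n -> S :=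
  fun l => if l == i then x else if l == j then y else 0.

Definition restr_plane n (R : nzRingType) (i j : 'I_n) (p : {mpoly R[n]}) :
    {poly {poly R}} :=
  mmap (fun c => c%:P%:P) (plane i j 'Y 'X) p.

Lemma mmap_plane n (R : nzRingType) (S : comNzRingType) (f : {rmorphism R -> S})
    (i j : 'I_n) (x y : S) (p : {mpoly R[n]}) :
  mmap f (plane i j x y) p = (map_poly (map_poly f) (restr_plane i j p)).[y, x].
Proof.
rewrite -!horner_evalE !rmorph_mmap; apply: eq_mmap => [c|l] /=.
  by rewrite !horner_evalE map_polyC /= map_polyC !hornerC.
rewrite /plane !horner_evalE; case: (l == i).
  by rewrite map_polyC /= map_polyX hornerC hornerX.
by case: (l == j); rewrite ?map_polyX ?hornerX ?hornerC // raddf0 !horner0.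
Qed.

Lemma mmap_horner_mpolyC n (R : nzRingType) (S : comNzRingType) (f : {rmorphism R -> S})
    (v : 'I_n -> S) (q : {poly R}) (t : {mpoly R[n]}) :
  mmap f v (map_poly (@mpolyC n R) q).[t] = (map_poly f q).[mmap f v t].
Proof.
rewrite -horner_map -map_poly_comp; congr _.[_].
by apply: eq_map_poly => c /=; rewrite mmapC.
Qed.

Section Reduction.
Variables (K : fieldType) (L : closedFieldType) (iota : {rmorphism K -> L}).
Local Notation ev p v := (mmap iota v p).

Lemma weighted_bipoly_mpoly (G : {poly {poly K}}) (m : nat) :
    (forall l, 'X^(m * l) %| G`_l) ->
  exists P : {mpoly K[2]}, forall (v : 'I_2 -> L) e,
    v ord_max = - v ord0 ^+ m * e -> ev P v = (map_poly (map_poly iota) G).[e, v ord0].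
Proof.
move=> dvdG; pose Q l := G`_l %/ 'X^(m * l).
exists (\sum_(l < size G) (map_poly (@mpolyC 2 K) (Q l)).['X_ord0] * (- 'X_ord_max) ^+ l).
move=> v e ve; rewrite (horner_coef (map_poly _ G)) size_map_inj_poly ?raddf0 //;
  last exact: map_poly_inj.
rewrite rmorph_sum horner_sum; apply: eq_bigr => l _.
rewrite rmorphM rmorphXn rmorphN /= mmap_horner_mpolyC !mmapX !mmap1U ve mulNr opprK.
rewrite coef_map /= -(divpK (dvdG l)) rmorphM /= map_polyXn.
by rewrite hornerM -rmorphXn hornerC hornerM hornerXn exprMn -exprM mulrA.
Qed.

Variables (n : nat) (f D : {mpoly K[n]}) (m : nat) (i j k : 'I_n) (w : L -> {poly L}).
Hypothesis f_test_plane : forall x c, ev f (plane i k x c) = x.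
Hypothesis D_test_plane : forall x c, ev D (plane i k x c) = (w c).[x].
Hypothesis w_onto : forall y, exists c, (w c).[0] = y.

Lemma generated_of_slice (F : {mpoly K[n]}) :
    (forall a, ev f a != 0 -> exists e,
       ev F a = ev F (plane i j (ev f a) e) /\ ev D a = - ev f a ^+ m * e) ->
  exists P : {mpoly K[2]}, F = P \mPo [tuple f; D].
Proof.
move=> F_slice; set G := restr_plane i j F.
have dvdG l : 'X^(m * l) %| G`_l.
  rewrite -(dvdp_map iota) map_polyXn -coef_map.
  pose A c := (map_poly (map_poly iota) (restr_plane i k F)).[c%:P].
  apply: (@dvdp_Xmk_coef _ (fun c => - w c) A) => [y|c x x0].
    by have [c w0] := w_onto (- y); exists c; rewrite hornerN w0 opprK.
  have [|e []] := F_slice (plane i k x c); rewrite f_test_plane // D_test_plane => Fe De.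
  rewrite /A -mmap_plane Fe mmap_plane hornerN De.
  by rewrite !mulNr opprK [_ * e]mulrC mulfK ?expf_neq0.
have [P P_G] := weighted_bipoly_mpoly dvdG.
have f_nz : f != 0.
  apply/eqP => f0; have := f_test_plane 1 0.
  by rewrite f0 mmap0 => /eqP; rewrite eq_sym oner_eq0.
exists P; apply/eqP; rewrite -subr_eq0.
suff : (F - (P \mPo [tuple f; D])) * f == 0 by rewrite mulf_eq0 (negbTE f_nz) orbF.
apply/eqP; apply: (@closed_mmap_eq0 _ _ iota) => a.
have [fa0|/F_slice[e [Fa Da]]] := eqVneq (ev f a) 0.
  by rewrite rmorphM /= fa0 mulr0.
by rewrite rmorphM rmorphB /= mmap_comp_mpoly Fa mmap_plane (P_G _ e) ?subrr ?mul0r.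
Qed.
End Reduction.

Lemma eq_inord n i j : (i <= n)%N -> (j <= n)%N ->
  (inord i == inord j :> 'I_n.+1) = (i == j).
Proof. by move=> le_in le_jn; rewrite -val_eqE /= !inordK. Qed.

Lemma eq_fun_ord5 (T : Type) (u v : 'I_5 -> T) :
    u (inord 0) = v (inord 0) -> u (inord 1) = v (inord 1) -> u (inord 2) = v (inord 2) ->
    u (inord 3) = v (inord 3) -> u (inord 4) = v (inord 4) ->
  u =1 v.
Proof.
by move=> u0 u1 u2 u3 u4 [[|[|[|[|[|//]]]]] lt_i5]; rewrite -[Ordinal _]inord_val.
Qed.

Definition weierstrass_disc (R : comNzRingType) (A1 A2 A3 A4 A6 : R) : R :=
  let b2 := A1 ^+ 2 + 4%:R * A2 in
  let b4 := 2%:R * A4 + A1 * A3 in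
  let b6 := A3 ^+ 2 + 4%:R * A6 in
  let b8 := A1 ^+ 2 * A6 + 4%:R * A2 * A6 - A1 * A3 * A4 + A2 * A3 ^+ 2 - A4 ^+ 2 in
  - b2 ^+ 2 * b8 - 8%:R * b4 ^+ 3 - 27%:R * b6 ^+ 2 + 9%:R * b2 * b4 * b6.

Section Weierstrass.
Variables (K : fieldType) (L : closedFieldType) (iota : {rmorphism K -> L}).
Local Notation ev p v := (mmap iota v p).

Lemma ev_Delta a : ev (Delta K) a =
  weierstrass_disc (a (inord 0)) (a (inord 1)) (a (inord 2)) (a (inord 3)) (a (inord 4)).
Proof.
rewrite /Delta /b2 /b4 /b6 /b8 /a1 /a2 /a3 /a4 /a6.
by rewrite !(rmorph_nat, rmorphB, rmorphD, rmorphM, rmorphN, rmorphXn) /= !mmapXU.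
Qed.

Lemma Delta_G1act r s t a : ev (Delta K) (G1act r s t a) = ev (Delta K) a.
Proof. rewrite !ev_Delta /G1act /= !inordK // /weierstrass_disc; ring. Qed.

Section Char2.
Hypothesis two0 : 2%:R = 0 :> L.

Lemma addr_mul2 (y z : L) : y + 2%:R * z = y.
Proof. by rewrite two0 mul0r addr0. Qed.

Lemma a1_G1act r s t a : ev (a1 K) (G1act r s t a) = ev (a1 K) a.
Proof. by rewrite !mmapXU /G1act /= inordK // two0 mul0r addr0. Qed.

Lemma a1_on_a1a3_plane x c : ev (a1 K) (plane (inord 0) (inord 2) x c) = x.
Proof. by rewrite mmapXU /plane eqxx. Qed.

Lemma Delta_on_a1a6_plane x e : ev (Delta K) (plane (inord 0) (inord 4) x e) = - x ^+ 6 * e.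
Proof.
rewrite ev_Delta /plane !eq_inord //= /weierstrass_disc.
by rewrite -[RHS](addr_mul2 _ (- 216%:R * e ^+ 2)); ring.
Qed.

Definition w2 (c : L) : {poly L} := (c ^+ 4)%:P + (c ^+ 3)%:P * 'X^3.

Lemma Delta_on_a1a3_plane x c : ev (Delta K) (plane (inord 0) (inord 2) x c) = (w2 c).[x].
Proof.
rewrite ev_Delta /plane !eq_inord //= /weierstrass_disc /w2.
rewrite hornerD hornerC hornerCM hornerXn.
by rewrite -[RHS](addr_mul2 _ (- 14%:R * c ^+ 4)); ring.
Qed.

Lemma w2_onto y : exists c, (w2 c).[0] = y.
Proof.
have [c <-] := closed_rootXn y (isT : (0 < 4)%N).
by exists c; rewrite /w2 hornerD hornerC hornerCM hornerXn expr0n mulr0 addr0.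
Qed.

Lemma a1_normal_form a : ev (a1 K) a != 0 ->
  exists r s t e, G1act r s t a =1 plane (inord 0) (inord 4) (ev (a1 K) a) e.
Proof.
(* r clears a3, s solves an Artin-Schreier equation to clear a2, t clears a4. *)
rewrite mmapXU => a1_nz.
pose A1 := a (inord 0); pose A2 := a (inord 1); pose A3 := a (inord 2); pose A4 := a (inord 3).
pose r := - A3 / A1.
have [s s2] := closed_root_quadratic (- A1) (A2 + 3%:R * r).
pose t := (A4 - s * A3 + 2%:R * r * A2 - r * s * A1 + 3%:R * r ^+ 2) / A1.
exists r, s, t, (G1act r s t a (inord 4)).
apply: eq_fun_ord5; rewrite /G1act /plane /= ?inordK ?eq_inord //= ?two0 ?mul0r ?addr0 //.
- by rewrite s2 /A1 /A2; ring.
- by rewrite /r /A1 /A3; field.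
- by rewrite /t /r /A1 /A2 /A3 /A4 two0; field.
Qed.

End Char2.

Section Char3.
Hypothesis three0 : 3%:R = 0 :> L.

Lemma addr_mul3 (y z : L) : y + 3%:R * z = y.
Proof. by rewrite three0 mul0r addr0. Qed.

Lemma ev_b2 a : ev (b2 K) a = a (inord 0) ^+ 2 + 4%:R * a (inord 1).
Proof. by rewrite /b2 rmorphD rmorphM rmorphXn rmorph_nat /= !mmapXU. Qed.

Lemma b2_G1act r s t a : ev (b2 K) (G1act r s t a) = ev (b2 K) a.
Proof.
rewrite !ev_b2 /G1act /= !inordK //.
by rewrite -[RHS](addr_mul3 _ (4%:R * r)); ring.
Qed.

Lemma b2_on_a2a4_plane x c : ev (b2 K) (plane (inord 1) (inord 3) x c) = x.
Proof.
rewrite ev_b2 /plane !eq_inord //=.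
by rewrite -[RHS](addr_mul3 _ x); ring.
Qed.

Lemma Delta_on_a2a6_plane x e : ev (Delta K) (plane (inord 1) (inord 4) x e) = - x ^+ 3 * e.
Proof.
rewrite ev_Delta /plane !eq_inord //= /weierstrass_disc.
by rewrite -[RHS](addr_mul3 _ (- 21%:R * x ^+ 3 * e - 144%:R * e ^+ 2)); ring.
Qed.

Definition w3 (c : L) : {poly L} := - (c ^+ 3)%:P + (c ^+ 2)%:P * 'X^2.

Lemma Delta_on_a2a4_plane x c : ev (Delta K) (plane (inord 1) (inord 3) x c) = (w3 c).[x].
Proof.
rewrite ev_Delta /plane !eq_inord //= /weierstrass_disc /w3.
rewrite hornerD hornerN hornerC hornerCM hornerXn.
by rewrite -[RHS](addr_mul3 _ (5%:R * x ^+ 2 * c ^+ 2 - 21%:R * c ^+ 3)); ring.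
Qed.

Lemma w3_onto y : exists c, (w3 c).[0] = y.
Proof.
have [c c3] := closed_rootXn (- y) (isT : (0 < 3)%N).
by exists c; rewrite /w3 hornerD hornerN hornerC hornerCM hornerXn expr0n mulr0 addr0 c3 opprK.
Qed.

Lemma b2_normal_form a : ev (b2 K) a != 0 ->
  exists r s t e, G1act r s t a =1 plane (inord 1) (inord 4) (ev (b2 K) a) e.
Proof.
(* s = a1 clears a1 and t clears a3; modulo 3 the new a4 is a4 - a1 a3 - r b2. *)
rewrite ev_b2 => b2_nz.
pose A1 := a (inord 0); pose A2 := a (inord 1); pose A3 := a (inord 2); pose A4 := a (inord 3).
pose r := (A4 - A1 * A3) / (A1 ^+ 2 + 4%:R * A2).
exists r, A1, (A3 + r * A1), (G1act r A1 (A3 + r * A1) a (inord 4)).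
have A4E : A4 = A1 * A3 + r * (A1 ^+ 2 + 4%:R * A2) by rewrite /r divfK // addrC subrK.
clearbody r.
apply: eq_fun_ord5; rewrite /G1act /plane /= ?inordK ?eq_inord //=.
- by rewrite -[RHS](addr_mul3 _ A1) /A1; ring.
- by rewrite -[RHS](addr_mul3 _ (r - A2 - A1 ^+ 2)) /A1 /A2; ring.
- by rewrite -[RHS](addr_mul3 _ (A3 + r * A1)) /A1 /A3; ring.
rewrite -[RHS](addr_mul3 _ (- A1 * A3 + 2%:R * r * A2 - r * A1 ^+ 2 + r ^+ 2)).
by rewrite -/A4 A4E /A1 /A2 /A3; ring.
Qed.

End Char3.

Section G1Invariants.
Variables (f : {mpoly K[5]}) (m : nat) (i k : 'I_5) (w : L -> {poly L}).
Hypothesis f_G1act : forall r s t a, ev f (G1act r s t a) = ev f a.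
Hypothesis f_normal_form : forall a, ev f a != 0 ->
  exists r s t e, G1act r s t a =1 plane i (inord 4) (ev f a) e.
Hypothesis Delta_normal_plane :
  forall x e, ev (Delta K) (plane i (inord 4) x e) = - x ^+ m * e.
Hypothesis f_test_plane : forall x c, ev f (plane i k x c) = x.
Hypothesis Delta_test_plane : forall x c, ev (Delta K) (plane i k x c) = (w c).[x].
Hypothesis w_onto : forall y, exists c, (w c).[0] = y.

Lemma G1_invariant_generated F : G1_invariant iota F <-> generated2 f (Delta K) F.
Proof.
rewrite /G1_invariant /generated2; split => [F_G1 | [P ->] r s t a].
  apply: (generated_of_slice f_test_plane Delta_test_plane w_onto).
  move=> a /f_normal_form[r [s [t [e nf]]]].
  exists e; rewrite -(Delta_G1act r s t) -!meval_map_mpoly -(F_G1 r s t) !meval_map_mpoly.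
  by rewrite !(eq_mmap _ (frefl _) nf) Delta_normal_plane.
rewrite !meval_map_mpoly !mmap_comp_mpoly; apply: eq_mmap => // l.
by rewrite !(tnth_nth 0); case: l => [[|[|//]] ?] /=; rewrite ?f_G1act ?Delta_G1act.
Qed.
End G1Invariants.
End Weierstrass.

Theorem lemma10p1 (K : fieldType) (L : closedFieldType)
  (iota : {rmorphism K -> L}) :
  algebraic_over iota -> perfect_field K ->
  (2%N \in [pchar K] ->
     forall F : {mpoly K[5]}, G1_invariant iota F <-> generated2 (a1 K) (Delta K) F) /\
  (3%N \in [pchar K] ->
     forall F : {mpoly K[5]}, G1_invariant iota F <-> generated2 (b2 K) (Delta K) F).
Proof.
move=> _ _; split=> /pcharf0 pK F; have pL := congr1 iota pK; rewrite rmorph_nat rmorph0 in pL.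
  exact: (G1_invariant_generated (@a1_G1act _ _ iota pL) (@a1_normal_form _ _ iota pL)
    (@Delta_on_a1a6_plane _ _ iota pL) (@a1_on_a1a3_plane _ _ iota)
    (@Delta_on_a1a3_plane _ _ iota pL) (@w2_onto L)).
exact: (G1_invariant_generated (@b2_G1act _ _ iota pL) (@b2_normal_form _ _ iota pL)
  (@Delta_on_a2a6_plane _ _ iota pL) (@b2_on_a2a4_plane _ _ iota pL)
  (@Delta_on_a2a4_plane _ _ iota pL) (@w3_onto L)).
Qed.
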